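(* Let $a,\alpha\in\mathcal{F}\setminus\{0\}$, $n$ a positive integer, and $f_n(x)=\alpha x^n$. (a) If $\operatorname{char}\mathcal{F}=0$, then for all $x,y\in D(a,|a|_\mathfrak{p}/q^{e+1})$, $|f_n(x)-f_n(y)|_\mathfrak{p}=|\alpha|_\mathfrak{p}|n|_\mathfrak{p}|a|_\mathfrak{p}^{n-1}|x-y|_\mathfrak{p}$, where $e$ is the ramification index of $\mathcal{F}/\mathbb{Q}_p$. (b) If $\operatorname{char}\mathcal{F}=p>0$, then for all $x,y\in D(a,|a|_\mathfrak{p}/q)$, $|f_n(x)-f_n(y)|_\mathfrak{p}=|\alpha|_\mathfrak{p}|a|_\mathfrak{p}^{\,n-p^{v_p(n)}}|x-y|_\mathfrak{p}^{\,p^{v_p(n)}}$. In particular, if $p\nmid n$, $f_n$ is scaling on $D(a,|a|_\mathfrak{p}/q)$ with scaling ratio $|\alpha|_\mathfrak{p}|a|_\mathfrak{p}^{n-1}$.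
   Context: $\mathcal{F}$ is a non-Archimedean local field, $q$ the cardinality of its residue field, $|\cdot|_\mathfrak{p}$ the normalized absolute value; $D(a,r)=\{x:|x-a|_\mathfrak{p}\le r\}$. When $\operatorname{char}\mathcal{F}=0$, $\mathcal{F}$ is a finite extension of $\mathbb{Q}_p$ with ramification index $e$, and for integers $k$, $v_\mathfrak{p}(k)=e\,v_p(k)$ where $v_p$ is the usual $p$-adic valuation on $\mathbb{Z}$; $|n|_\mathfrak{p}$ denotes the absolute value of the integer $n$ viewed in $\mathcal{F}$. $v_p(n)$ is the exponent of $p$ in $n$. A map is scaling with ratio $q^\lambda$ if $|f(x)-f(y)|_\mathfrak{p}=q^\lambda|x-y|_\mathfrak{p}$ for all $x,y$ in its domain. *)

From HB Require Import structures.
From mathcomp Require Import all_boot all_order all_algebra.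
Set Implicit Arguments. Unset Strict Implicit. Unset Printing Implicit Defensive.
Import Order.TTheory GRing.Theory Num.Theory.
Local Open Scope ring_scope.

(* A non-Archimedean local field is presented as a field F together with a
   normalized discrete valuation v : F -> int (only meaningful on nonzero
   elements) and the cardinality q of its residue field, such that F is
   complete and the residue field O/m is finite with q elements. *)

Section LocalField.
Variable F : fieldType.
Variable v : F -> int.
Variable q : nat.

Definition in_O (x : F) : Prop := x = 0 \/ (0 <= v x).
Definition in_m (x : F) : Prop := x = 0 \/ (0 < v x).

Definition absv (x : F) : rat := if x == 0 then 0 else (q%:R : rat) ^ (- v x).

Definition is_nonarch_local_field : Prop :=
  [/\
      (forall x y, x != 0 -> y != 0 -> v (x * y) = v x + v y),
      (forall x y, x != 0 -> y != 0 -> x + y != 0 ->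
          Num.min (v x) (v y) <= v (x + y)),
      (* normalized discrete: v is onto Z, realized by a uniformizer *)
      (exists pi : F, pi != 0 /\ v pi = 1),
      (* finite residue field with q elements: a complete system of
         q pairwise incongruent representatives of O/m *)
      (exists reps : seq F,
          [/\ size reps = q,
              (forall r, r \in reps -> in_O r),
              (forall i j, (i < q)%N -> (j < q)%N ->
                  in_m (nth 0 reps i - nth 0 reps j) -> i = j)
            & (forall x, in_O x -> exists2 r, r \in reps & in_m (x - r))])
    &
      (forall u : nat -> F,
          (forall k : nat, exists N : nat, forall m n : nat, (N <= m)%N -> (N <= n)%N ->
              absv (u m - u n) <= (q%:R : rat) ^ (- (k%:Z))) ->
          exists l : F, forall k : nat, exists N : nat, forall m : nat, (N <= m)%N ->
              absv (u m - l) <= (q%:R : rat) ^ (- (k%:Z)))].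

Definition disk (a : F) (r : rat) (x : F) : Prop := absv (x - a) <= r.

(* p is the residue characteristic: p prime and p lies in the maximal ideal
   (used in characteristic 0, where F is a finite extension of Q_p) *)
Definition residue_char (p : nat) : Prop := prime p /\ (0 < v p%:R).

(* ramification index over Q_p: e = v_p(p) *)
Definition ram_index (p : nat) : int := v p%:R.

Definition scaling_on (D : F -> Prop) (f : F -> F) (c : rat) : Prop :=
  forall x y, D x -> D y -> absv (f x - f y) = c * absv (x - y).

End LocalField.

Definition powmap (F : fieldType) (alpha : F) (n : nat) (x : F) : F := alpha * x ^+ n.

(* Write [x = y + d] with [v y = v a] and [v d > v a]. In characteristic 0 the
   binomial expansion of [(y + d)^n - y^n] is dominated by its linear term
   [n y^(n-1) d]: the [j]-th term gains [(j-1)(v d - v y) >= (j-1)(e+1)] on it,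
   while its coefficient ['C(n, j) = (n / j) 'C(n-1, j-1)] loses at most
   [v j = e v_p(j) <= e (j-1)]. In characteristic [p], write [n = m p^k] with
   [p] prime to [m]; Frobenius turns [x^n - y^n] into [X^m - Y^m] with
   [X = x^(p^k)], [Y = y^(p^k)] and [X - Y = d^(p^k)], and since [m] is a unit
   the linear term [m Y^(m-1) (X - Y)] dominates in the same way. *)

From HB Require Import structures.
From mathcomp Require Import all_boot all_order all_algebra.
From mathcomp Require Import zify ring.
Import Order.TTheory GRing.Theory Num.Theory.
Set Implicit Arguments. Unset Strict Implicit. Unset Printing Implicit Defensive.
Local Open Scope ring_scope.

Section Valuation.
Variables (F : fieldType) (v : F -> int).
Hypothesis valM : forall x y : F, x != 0 -> y != 0 -> v (x * y) = v x + v y.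
Hypothesis val_min : forall x y : F, x != 0 -> y != 0 -> x + y != 0 ->
  Num.min (v x) (v y) <= v (x + y).

(* [val_ge x c] reads [v x >= c] with the convention [v 0 = +oo]. *)
Definition val_ge (x : F) (c : int) : Prop := x = 0 \/ c <= v x.

Lemma val1 : v 1 = 0.
Proof. by apply: (@addrI _ (v 1)); rewrite -valM ?oner_neq0 // mulr1 addr0. Qed.

Lemma valN (x : F) : x != 0 -> v (- x) = v x.
Proof.
move=> x0; have N10 : (-1 : F) != 0 by rewrite oppr_eq0 oner_neq0.
have vN1 : v (-1) = 0 by have := valM N10 N10; rewrite mulrNN mulr1 val1; lia.
by rewrite -mulN1r valM // vN1 add0r.
Qed.

Lemma valX (x : F) k : x != 0 -> v (x ^+ k) = k%:Z * v x.
Proof.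
move=> x0; elim: k => [|k IH]; first by rewrite expr0 val1 mul0r.
by rewrite exprS valM ?expf_neq0 // IH; lia.
Qed.

Lemma val_ge_val (x : F) : val_ge x (v x).
Proof. by right. Qed.

Lemma val_geW (x : F) (c1 c2 : int) : val_ge x c2 -> c1 <= c2 -> val_ge x c1.
Proof. by move=> [->|h] c12; [left|right; lia]. Qed.

Lemma val_geD (x y : F) (c : int) : val_ge x c -> val_ge y c -> val_ge (x + y) c.
Proof.
move=> [->|hx]; first by rewrite add0r.
move=> [->|hy]; first by rewrite addr0; right.
have [->|x0] := eqVneq x 0; first by rewrite add0r; right.
have [->|y0] := eqVneq y 0; first by rewrite addr0; right.
have [->|s0] := eqVneq (x + y) 0; first by left.
by right; apply: le_trans (val_min x0 y0 s0); rewrite le_min hx hy.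
Qed.

Lemma val_geN (x : F) (c : int) : val_ge x c -> val_ge (- x) c.
Proof.
have [->|x0] := eqVneq x 0; first by rewrite oppr0; left.
by move=> [/eqP|h]; [rewrite (negbTE x0)|right; rewrite valN].
Qed.

Lemma val_geB (x y : F) (c : int) : val_ge x c -> val_ge y c -> val_ge (x - y) c.
Proof. by move=> hx hy; apply: val_geD hx (val_geN hy). Qed.

Lemma val_geM (x y : F) (c1 c2 : int) : val_ge x c1 -> val_ge y c2 -> val_ge (x * y) (c1 + c2).
Proof.
move=> [->|hx]; first by rewrite mul0r; left.
move=> [->|hy]; first by rewrite mulr0; left.
have [->|x0] := eqVneq x 0; first by rewrite mul0r; left.
have [->|y0] := eqVneq y 0; first by rewrite mulr0; left.
by right; rewrite valM //; lia.
Qed.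

Lemma val_ge_nat k : val_ge k%:R 0.
Proof.
elim: k => [|k IH]; first by left.
by rewrite mulrS; apply: val_geD => //; right; rewrite val1.
Qed.

Lemma val_ge_sum k (f : 'I_k -> F) (c : int) :
  (forall i, val_ge (f i) c) -> val_ge (\sum_(i < k) f i) c.
Proof.
move=> hf; apply: (big_ind (fun x => val_ge x c)) => //; first by left.
by move=> x y; apply: val_geD.
Qed.

Lemma val_dominant (x y : F) : x != 0 -> val_ge y (v x + 1) -> x + y != 0 /\ v (x + y) = v x.
Proof.
move=> x0; have [->|y0] := eqVneq y 0; first by rewrite addr0.
case=> [/eqP|hy]; first by rewrite (negbTE y0).
have xy0 : x + y != 0.
  apply: contraTneq hy => /eqP; rewrite addr_eq0 => /eqP ->.
  by rewrite valN // -ltNge ltzD1.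
split=> //.
have ny0 : - y != 0 by rewrite oppr_eq0.
have := val_min xy0 ny0; rewrite addrK valN // => /(_ x0).
have := val_min x0 y0 xy0; rewrite !ge_min => /orP[] ? /orP[] ?; lia.
Qed.

Lemma val_nat_coprime p m : prime p -> val_ge p%:R 1 -> coprime p m ->
  m%:R != 0 :> F /\ v m%:R = 0.
Proof.
move=> p_pr vp pm.
have [a _] := Bezoutl m (prime_gt0 p_pr); rewrite (eqP pm) => /dvdnP[w ew].
have not_vm : ~ val_ge m%:R 1.
  move=> vm; have : val_ge (w%:R * p%:R - a%:R * m%:R) 1.
    by apply: val_geB; rewrite -(add0r (1 : int)); apply: val_geM (val_ge_nat _) _.
  by rewrite -!natrM -ew natrD addrK => -[/eqP|]; rewrite ?oner_eq0 // val1.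
have m0 : m%:R != 0 :> F by apply: contra_not_neq not_vm => ->; left.
case: (val_ge_nat m) => [/eqP|vm_ge0]; first by rewrite (negbTE m0).
split=> //; suff : ~ 1 <= v m%:R by lia.
by move=> ?; apply: not_vm; right.
Qed.

Lemma val_nat_logn p j : prime p -> p%:R != 0 :> F -> 0 < v p%:R -> (0 < j)%N ->
  j%:R != 0 :> F /\ v j%:R = (logn p j)%:Z * v p%:R.
Proof.
move=> p_pr p0 vp j0; have [m pm ej] := pfactor_coprime p_pr j0.
have [m0 vm] := val_nat_coprime p_pr (or_intror vp) pm.
have -> : j%:R = m%:R * p%:R ^+ logn p j :> F by rewrite {1}ej natrM natrX.
split; first by rewrite mulf_neq0 ?expf_neq0.
by rewrite valM ?expf_neq0 // vm valX // add0r.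
Qed.

(* [j 'C(n, j) = n 'C(n-1, j-1)] and [v j = (logn p j) v p <= (j - 1) v p]. *)
Lemma val_ge_binomial p n j : [pchar F] =i pred0 -> prime p -> 0 < v p%:R -> (0 < j)%N ->
  val_ge 'C(n, j)%:R (v n%:R - (j.-1)%:Z * v p%:R).
Proof.
move=> F0 p_pr vp j0; have natF0 := (pcharf0P F).1 F0.
have [->|C0] := eqVneq ('C(n, j)%:R : F) 0; first by left.
have jn : (j <= n)%N by rewrite -bin_gt0 lt0n -natF0.
have C'0 : 'C(n.-1, j.-1)%:R != 0 :> F by rewrite natF0 -lt0n bin_gt0; lia.
have n0 : n%:R != 0 :> F by rewrite natF0; lia.
have p0 : p%:R != 0 :> F by rewrite natF0 -lt0n prime_gt0.
have [j0F vj] := val_nat_logn p_pr p0 vp j0.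
have ediag : v n%:R + v 'C(n.-1, j.-1)%:R = v j%:R + v 'C(n, j)%:R.
  by rewrite -!valM // -!natrM mul_bin_diag prednK.
case: (val_ge_nat 'C(n.-1, j.-1)) => [/eqP|vC']; first by rewrite (negbTE C'0).
have := ltn_logl p j0; right; nia.
Qed.

(* The linear term [n y^(n-1) d] dominates the binomial expansion as long as
   each coefficient ['C(n, j)] loses less valuation against [n] than the
   [j - 1] extra factors [d / y] gain. *)
Lemma val_exprDn_leading (y d : F) n : y != 0 -> d != 0 -> n%:R != 0 :> F ->
  (forall j, (1 < j <= n)%N ->
     val_ge 'C(n, j)%:R (v n%:R + 1 - (j%:Z - 1) * (v d - v y))) ->
  (y + d) ^+ n - y ^+ n != 0 /\
  v ((y + d) ^+ n - y ^+ n) = v n%:R + (n.-1)%:Z * v y + v d.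
Proof.
case: n => [|n] y0 d0 n0 hC; first by rewrite eqxx in n0.
have val_yd i j : y ^+ i * d ^+ j != 0 /\ v (y ^+ i * d ^+ j) = i%:Z * v y + j%:Z * v d.
  by rewrite mulf_neq0 ?expf_neq0 // valM ?expf_neq0 // !valX.
rewrite exprDn 2!big_ord_recl /bump /= subn0 subn1 bin0 bin1 expr0 expr1 mulr1 mulr1n.
rewrite [_ - _]addrC addKr -mulr_natl.
have [yd0 vyd] := val_yd n 1%N; rewrite expr1 in yd0 vyd.
have lin0 : n.+1%:R * (y ^+ n * d) != 0 by rewrite mulf_neq0.
suff /(val_dominant lin0) : val_ge (\sum_(i < n) y ^+ (n - i.+1) * d ^+ i.+2 *+ 'C(n.+1, i.+2))
    (v (n.+1%:R * (y ^+ n * d)) + 1).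
  by case=> -> ->; rewrite valM // vyd; split=> //; lia.
apply: val_ge_sum => i; rewrite -mulr_natl.
have [_ vi] := val_yd (n - i.+1)%N i.+2.
have hCi := hC i.+2 (ltn_ord i).
apply: val_geW (val_geM hCi (val_ge_val _)) _.
rewrite valM // vyd vi; have lt_in := ltn_ord i.
have -> : ((n - i.+1)%N : int) = n%:Z - i%:Z - 1 by lia.
have -> : (i.+2 : int) = i%:Z + 2 by lia.
lia.
Qed.

Lemma val_near_center (a y : F) : a != 0 -> val_ge (y - a) (v a + 1) ->
  y != 0 /\ v y = v a.
Proof. by move=> a0 /(val_dominant a0); rewrite addrC subrK. Qed.

Lemma val_near_diff (a x y : F) (c : int) : a != 0 -> x != y ->
  val_ge (x - a) (v a + c) -> val_ge (y - a) (v a + c) -> v a + c <= v (x - y).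
Proof.
move=> a0 xy hx hy; have := val_geB hx hy; rewrite opprB addrA subrK.
by case=> [/eqP|//]; rewrite subr_eq0 (negbTE xy).
Qed.

Lemma val_exprB_char0 p n (a x y : F) : [pchar F] =i pred0 -> prime p ->
  0 < v p%:R -> (0 < n)%N -> a != 0 -> x != y ->
  val_ge (x - a) (v a + (v p%:R + 1)) -> val_ge (y - a) (v a + (v p%:R + 1)) ->
  x ^+ n - y ^+ n != 0 /\ v (x ^+ n - y ^+ n) = v (n%:R * a ^+ n.-1 * (x - y)).
Proof.
move=> F0 p_pr vp n_gt0 a0 xy hx hy.
have [y0 vy] : y != 0 /\ v y = v a.
  by apply: val_near_center (val_geW hy _) => //; lia.
have vd := val_near_diff a0 xy hx hy.
have d0 : x - y != 0 by rewrite subr_eq0.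
have n0 : n%:R != 0 :> F by rewrite ((pcharf0P F).1 F0) -lt0n.
set d := x - y in d0 vd *; have -> : x = y + d by rewrite /d addrC subrK.
suff /(val_exprDn_leading y0 d0 n0) [-> ->] :
    forall j, (1 < j <= n)%N -> val_ge 'C(n, j)%:R (v n%:R + 1 - (j%:Z - 1) * (v d - v y)).
  by split=> //; rewrite !valM ?mulf_neq0 ?expf_neq0 // valX // vy.
move=> j /andP[j1 _]; apply: val_geW (val_ge_binomial n F0 p_pr vp (ltnW j1)) _.
have -> : (j.-1 : int) = j%:Z - 1 by lia.
have : 1 <= j%:Z - 1 by lia.
nia.
Qed.

Lemma val_exprB_pchar p n (a x y : F) : p \in [pchar F] -> (0 < n)%N ->
  a != 0 -> x != y -> val_ge (x - a) (v a + 1) -> val_ge (y - a) (v a + 1) ->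
  x ^+ n - y ^+ n != 0 /\
  v (x ^+ n - y ^+ n) = v (a ^+ (n - p ^ logn p n) * (x - y) ^+ (p ^ logn p n)).
Proof.
move=> pF n_gt0 a0 xy hx hy; have p_pr := pcharf_prime pF.
have [m pm en] := pfactor_coprime p_pr n_gt0; set P := (p ^ logn p n)%N in en *.
have P_gt0 : (0 < P)%N by rewrite expn_gt0 prime_gt0.
have [y0 vy] := val_near_center a0 hy.
have vd := val_near_diff a0 xy hx hy.
have d0 : x - y != 0 by rewrite subr_eq0.
have [m0 vm] := val_nat_coprime p_pr (or_introl (pcharf0 pF)) pm.
have frobD : x ^+ P = y ^+ P + (x - y) ^+ P.
  have pnatP : [pchar F].-nat P by rewrite pnatX pnatE // pF.
  by rewrite -exprDn_pchar // (addrC y) subrK.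
have -> : x ^+ n - y ^+ n = (y ^+ P + (x - y) ^+ P) ^+ m - (y ^+ P) ^+ m.
  by rewrite en mulnC !exprM -frobD.
have Y0 : y ^+ P != 0 by rewrite expf_neq0.
have D0 : (x - y) ^+ P != 0 by rewrite expf_neq0.
suff /(val_exprDn_leading Y0 D0 m0) [-> ->] : forall j, (1 < j <= m)%N ->
    val_ge 'C(m, j)%:R (v m%:R + 1 - (j%:Z - 1) * (v ((x - y) ^+ P) - v (y ^+ P))).
  have -> : (n - P = m.-1 * P)%N by rewrite en -{2}(mul1n P) -mulnBl subn1.
  by split=> //; rewrite valM ?expf_neq0 // !valX // vm vy PoszM; ring.
move=> j /andP[j1 _]; apply: val_geW (val_ge_nat _) _.
have P1 : 1 <= P%:Z by lia.
have gain : 1 <= P%:Z * (v (x - y) - v a) by nia.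
rewrite vm !valX // vy -mulrBr; have : 1 <= j%:Z - 1 by lia.
nia.
Qed.

End Valuation.

Section AbsoluteValue.
Variables (F : fieldType) (v : F -> int) (q : nat).
Hypothesis valM : forall x y : F, x != 0 -> y != 0 -> v (x * y) = v x + v y.
Hypothesis val_min : forall x y : F, x != 0 -> y != 0 -> x + y != 0 ->
  Num.min (v x) (v y) <= v (x + y).
Hypothesis q_gt1 : (1 < q)%N.

Let q0 : (q%:R : rat) != 0. Proof. by rewrite pnatr_eq0 -lt0n ltnW. Qed.

Lemma absv0 : absv v q 0 = 0.
Proof. by rewrite /absv eqxx. Qed.

Lemma absv_val (x : F) : x != 0 -> absv v q x = q%:R ^ (- v x).
Proof. by move=> x0; rewrite /absv (negbTE x0). Qed.

Lemma absv_eq_val (x y : F) : x != 0 -> y != 0 -> v x = v y -> absv v q x = absv v q y.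
Proof. by move=> x0 y0 vxy; rewrite !absv_val // vxy. Qed.

Lemma absvM (x y : F) : absv v q (x * y) = absv v q x * absv v q y.
Proof.
have [->|x0] := eqVneq x 0; first by rewrite mul0r absv0 mul0r.
have [->|y0] := eqVneq y 0; first by rewrite mulr0 absv0 mulr0.
by rewrite !absv_val ?mulf_neq0 // valM // opprD expfzDr.
Qed.

Lemma absvX (x : F) k : absv v q (x ^+ k) = absv v q x ^+ k.
Proof.
elim: k => [|k IH]; last by rewrite !exprS absvM IH.
by rewrite !expr0 absv_val ?oner_neq0 // (val1 valM) oppr0 expr0z.
Qed.

Lemma disk_val_ge (a x : F) (c : int) : a != 0 ->
  disk v q a (absv v q a / q%:R ^ c) x -> val_ge v (x - a) (v a + c).
Proof.
move=> a0; rewrite /disk; have [->|xa0] := eqVneq (x - a) 0; first by left.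
rewrite !absv_val // invr_expz -expfzDr // ler_eXz2l ?ltr1n // => ?; right; lia.
Qed.

Lemma absv_exprB_char0 p n (a x y : F) : [pchar F] =i pred0 -> prime p ->
  0 < v p%:R -> (0 < n)%N -> a != 0 ->
  val_ge v (x - a) (v a + (v p%:R + 1)) -> val_ge v (y - a) (v a + (v p%:R + 1)) ->
  absv v q (x ^+ n - y ^+ n) = absv v q n%:R * absv v q a ^+ (n - 1) * absv v q (x - y).
Proof.
move=> F0 p_pr vp n_gt0 a0 hx hy.
have [->|xy] := eqVneq x y; first by rewrite !subrr absv0 mulr0.
have [nz vs] := val_exprB_char0 valM val_min F0 p_pr vp n_gt0 a0 xy hx hy.
have n0 : n%:R != 0 :> F by rewrite ((pcharf0P F).1 F0) -lt0n.
by rewrite (absv_eq_val nz _ vs) ?absvM ?absvX ?subn1 // !mulf_neq0 ?expf_neq0 ?subr_eq0.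
Qed.

Lemma absv_exprB_pchar p n (a x y : F) : p \in [pchar F] -> (0 < n)%N -> a != 0 ->
  val_ge v (x - a) (v a + 1) -> val_ge v (y - a) (v a + 1) ->
  absv v q (x ^+ n - y ^+ n)
    = absv v q a ^+ (n - p ^ logn p n) * absv v q (x - y) ^+ (p ^ logn p n).
Proof.
move=> pF n_gt0 a0 hx hy.
have [->|xy] := eqVneq x y.
  by rewrite !subrr absv0 expr0n gtn_eqF ?pfactor_gt0 ?mulr0.
have [nz vs] := val_exprB_pchar valM val_min pF n_gt0 a0 xy hx hy.
by rewrite (absv_eq_val nz _ vs) ?absvM ?absvX // mulf_neq0 ?expf_neq0 ?subr_eq0.
Qed.

End AbsoluteValue.

Lemma local_field_q_gt1 (F : fieldType) (v : F -> int) q :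
  is_nonarch_local_field v q -> (1 < q)%N.
Proof.
case=> valM val_min _ [reps [size_reps _ _ reps_cover]] _.
have v1 := val1 valM.
have [r0 r0_in m0] := reps_cover 0 (or_introl erefl).
have O1 : in_O v 1 by right; rewrite v1.
have [r1 r1_in m1] := reps_cover 1 O1.
rewrite ltnNge; apply/negP => q_le1.
have r01 : r0 = r1.
  move: r0_in r1_in q_le1; rewrite -size_reps.
  by case: (reps) => [|r []] //=; rewrite !inE => /eqP -> /eqP ->.
have in_m_ge1 (x : F) : in_m v x -> val_ge v x 1 by case=> [->|?]; [left|right; lia].
have : val_ge v ((1 - r1) - (0 - r0)) 1 by apply: (val_geB valM val_min); apply: in_m_ge1.
by rewrite r01 opprB addrA subrK subr0 => -[/eqP|]; rewrite ?oner_eq0 // v1.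
Qed.

Theorem lemma4p1 (F : fieldType) (v : F -> int) (q : nat)
    (hF : is_nonarch_local_field v q) (a alpha : F) (n : nat) :
  a != 0 -> alpha != 0 -> (0 < n)%N ->
  ([pchar F] =i pred0 ->
     forall p : nat, residue_char v p ->
     forall x y : F,
       disk v q a (absv v q a / (q%:R : rat) ^ (ram_index v p + 1)) x ->
       disk v q a (absv v q a / (q%:R : rat) ^ (ram_index v p + 1)) y ->
       absv v q (powmap alpha n x - powmap alpha n y)
         = absv v q alpha * absv v q (n%:R) * absv v q a ^+ (n - 1)
           * absv v q (x - y))
  /\
  (forall p : nat, p \in [pchar F] ->
     (forall x y : F,
        disk v q a (absv v q a / q%:R) x ->
        disk v q a (absv v q a / q%:R) y ->
        absv v q (powmap alpha n x - powmap alpha n y)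
          = absv v q alpha * absv v q a ^+ (n - p ^ logn p n)
            * absv v q (x - y) ^+ (p ^ logn p n))
     /\
     (~~ (p %| n)%N ->
        scaling_on v q (disk v q a (absv v q a / q%:R)) (powmap alpha n)
          (absv v q alpha * absv v q a ^+ (n - 1)))).
Proof.
move=> a0 _ n_gt0; have q_gt1 := local_field_q_gt1 hF.
case: hF => valM val_min _ _ _.
have absv_powmapB x y : absv v q (powmap alpha n x - powmap alpha n y)
    = absv v q alpha * absv v q (x ^+ n - y ^+ n) by rewrite -mulrBr absvM.
have disk1 x : disk v q a (absv v q a / q%:R) x -> val_ge v (x - a) (v a + 1).
  by rewrite -[(q%:R : rat)]expr1z; apply: disk_val_ge.
have powmap_pchar p : p \in [pchar F] -> forall x y,
    disk v q a (absv v q a / q%:R) x -> disk v q a (absv v q a / q%:R) y ->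
    absv v q (powmap alpha n x - powmap alpha n y)
      = absv v q alpha * absv v q a ^+ (n - p ^ logn p n)
        * absv v q (x - y) ^+ (p ^ logn p n).
  move=> pF x y /disk1 hx /disk1 hy.
  by rewrite absv_powmapB (absv_exprB_pchar valM val_min q_gt1 pF n_gt0 a0 hx hy) mulrA.
split=> [F0 p [p_pr vp] x y /(disk_val_ge q_gt1 a0) hx /(disk_val_ge q_gt1 a0) hy|p pF].
  by rewrite absv_powmapB (absv_exprB_char0 valM val_min q_gt1 F0 p_pr vp n_gt0 a0 hx hy) !mulrA.
split=> [|p_n x y hx hy]; first exact: powmap_pchar.
have logn0 : logn p n = 0%N by rewrite lognE (negbTE p_n) !andbF.
by rewrite (powmap_pchar p pF x y hx hy) logn0 expr1.
Qed.
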